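(* Let $G$ be a DAG with maximum in-degree $\Delta_{in}$, and let $k,g,r$ be positive integers with $r\ge\Delta_{in}+1$. Let $\sigma=(T_1,\dots,T_s)$ be a non-idle greedy schedule of $G$ on $k$ processors. Consider the MPP pebbling strategy that, for $t=1,\dots,s$ in order, assigns the (at most $k$) nodes of $T_t$ to distinct processors and, for each such node $v$ on processor $p$: loads all in-neighbors of $v$ from slow memory into $p$ (via (R2) steps, in parallel across processors), computes $v$ on $p$ (one parallel (R3) step for all of $T_t$), saves $v$ to slow memory (one parallel (R1) step), and then deletes all red pebbles. The cost of this strategy is at most $2\cdot\bigl(g\cdot(\Delta_{in}+1)+1\bigr)\cdot\mathrm{OPT}$.
   Context: Multiprocessor red-blue pebbling (MPP). Input: a DAG $G=(V,E)$ with $n=|V|$ and positive integers $k$ (number of processors), $r$ (fast-memory size per processor), $g$ (cost of an I/O step). $\Delta_{in}$ denotes the maximum in-degree of $G$; sources/sinks are nodes of in-degree/out-degree $0$. A configuration is a tuple $(R^1,\dots,R^k,B)$ of subsets of $V$ ($R^j$ = nodes carrying a red pebble of processor $j$, $B$ = nodes carrying a blue pebble); it is valid if $|R^j|\le r$ for all $j$. The initial configuration has all sets empty; a configuration is terminal if every sink lies in $B\cup\bigcup_j R^j$. The transition rules are: (R1) for some $m\le k$, pairwise distinct processors $j_1,\dots,j_m$ and nodes $v_1,\dots,v_m$ with $v_i\in R^{j_i}$, add each $v_i$ to $B$ (cost $g$); (R2) for some $m\le k$, pairwise distinct processors $j_1,\dots,j_m$ and nodes $v_1,\dots,v_m\in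 B$, add each $v_i$ to $R^{j_i}$ (cost $g$); (R3) for some $m\le k$, pairwise distinct processors $j_1,\dots,j_m$ and nodes $v_1,\dots,v_m$ such that every in-neighbor of $v_i$ lies in $R^{j_i}$, add each $v_i$ to $R^{j_i}$ (cost $1$); (R4) remove a single red or blue pebble (cost $0$). A pebbling strategy is a sequence of valid configurations starting at the initial configuration and ending at a terminal one, each obtained from its predecessor by one rule; its cost is the sum of the costs of the rules applied. $\mathrm{OPT}$ denotes the minimum cost of a pebbling strategy. Applications of (R1),(R2) are called I/O steps and applications of (R3) compute steps. A non-idle greedy schedule of $G$ on $k$ processors is a partition of $V$ into nonempty sets $T_1,\dots,T_s$ with $|T_t|\le k$ such that every in-neighbor of a node in $T_t$ lies in $T_1\cup\dots\cup T_{t-1}$, and such that for every $t$ with $|T_t|<k$, every node not in $T_1\cup\dots\cup T_{t-1}$ all of whose in-neighbors lie in $T_1\cup\dots\cup T_{t-1}$ belongs to $T_t$. *)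

From mathcomp Require Import all_boot.
Set Implicit Arguments.
Unset Strict Implicit.
Unset Printing Implicit Defensive.

Definition in_nbrs (V : finType) (E : rel V) (v : V) : {set V} :=
  [set u | E u v].

Definition indeg (V : finType) (E : rel V) (v : V) : nat := #|in_nbrs E v|.

Definition max_indeg (V : finType) (E : rel V) : nat := \max_(v : V) indeg E v.

Definition acyclic (V : finType) (E : rel V) : Prop :=
  forall (v : V) (p : seq V), path E v p -> last v p = v -> p = [::].

Definition is_sink (V : finType) (E : rel V) (v : V) : bool :=
  [forall w, ~~ E v w].

(* configuration (R^1..R^k, B); processors are 'I_k *)
Definition config (V : finType) (k : nat) : Type :=
  ({ffun 'I_k -> {set V}} * {set V})%type.

Definition init_config (V : finType) (k : nat) : config V k :=
  ([ffun => set0], set0).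

Definition valid_config (V : finType) (k r : nat) (c : config V k) : bool :=
  [forall j, #|c.1 j| <= r].

Definition terminal (V : finType) (E : rel V) (k : nat) (c : config V k) : bool :=
  [forall v, is_sink E v ==>
     ((v \in c.2) || [exists j, v \in c.1 j])].

(* Rule applications.  A list of (processor, node) pairs encodes the
   parallel application of (R1), (R2), (R3) with m = size of the list. *)
Inductive move (V : finType) (k : nat) : Type :=
  | SaveR1 of seq ('I_k * V)
  | LoadR2 of seq ('I_k * V)
  | CompR3 of seq ('I_k * V)
  | DelRedR4 of 'I_k & V
  | DelBlueR4 of V.

Definition move_cost (V : finType) (k g : nat) (m : move V k) : nat :=
  match m with
  | SaveR1 _ => g
  | LoadR2 _ => g
  | CompR3 _ => 1
  | DelRedR4 _ _ => 0
  | DelBlueR4 _ => 0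
  end.

Definition add_red (V : finType) (k : nat) (R : {ffun 'I_k -> {set V}})
  (l : seq ('I_k * V)) : {ffun 'I_k -> {set V}} :=
  [ffun j => R j :|: [set v | (j, v) \in l]].

Definition step (V : finType) (E : rel V) (k : nat) (c : config V k)
  (m : move V k) : option (config V k) :=
  let: (R, B) := c in
  match m with
  | SaveR1 l =>
      if uniq (map fst l) && all (fun p => p.2 \in R p.1) l
      then Some (R, B :|: [set v | v \in map snd l]) else None
  | LoadR2 l =>
      if uniq (map fst l) && all (fun p => p.2 \in B) l
      then Some (add_red R l, B) else None
  | CompR3 l =>
      if uniq (map fst l) && all (fun p => in_nbrs E p.2 \subset R p.1) l
      then Some (add_red R l, B) else None
  | DelRedR4 j v =>
      if v \in R j then Some ([ffun i => if i == j then R i :\ v else R i], B)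
      else None
  | DelBlueR4 v =>
      if v \in B then Some (R, B :\ v) else None
  end.

Fixpoint run (V : finType) (E : rel V) (k r : nat) (c : config V k)
  (s : seq (move V k)) : option (config V k) :=
  match s with
  | [::] => Some c
  | m :: s' =>
      match step E c m with
      | Some c' => if valid_config r c' then run E r c' s' else None
      | None => None
      end
  end.

Definition pebbling_strategy (V : finType) (E : rel V) (k r : nat)
  (s : seq (move V k)) : bool :=
  match run E r (init_config V k) s with
  | Some c => terminal E c
  | None => false
  end.

Definition strategy_cost (V : finType) (k g : nat) (s : seq (move V k)) : nat :=
  \sum_(m <- s) move_cost g m.

(* Non-idle greedy schedules: T = [:: T_1; ...; T_s] (0-indexed here)  *)

Definition sched_before (V : finType) (T : seq {set V}) (t : nat) : {set V} :=
  \bigcup_(i < t) nth set0 T i.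

Definition non_idle_greedy_schedule (V : finType) (E : rel V) (k : nat)
  (T : seq {set V}) : Prop :=
  (forall v : V, exists2 t, t < size T & v \in nth set0 T t) /\
  (forall t1 t2, t1 < size T -> t2 < size T -> t1 != t2 ->
     [disjoint nth set0 T t1 & nth set0 T t2]) /\
  (forall t, t < size T -> nth set0 T t != set0) /\
  (forall t, t < size T -> #|nth set0 T t| <= k) /\
  (forall t, t < size T -> forall v, v \in nth set0 T t ->
     in_nbrs E v \subset sched_before T t) /\
  (forall t, t < size T -> #|nth set0 T t| < k ->
     forall v, v \notin sched_before T t ->
       in_nbrs E v \subset sched_before T t -> v \in nth set0 T t).

(* The strategy induced by a schedule T and a processor assignment asg
   (asg t maps the nodes of T_t injectively to processors).            *)

Definition greedy_phase (V : finType) (E : rel V) (k : nat)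
  (T : seq {set V}) (asg : nat -> V -> 'I_k) (t : nat) : seq (move V k) :=
  let Tt := nth set0 T t in
  let L := enum Tt in
  let d := \max_(v in Tt) indeg E v in
  (* parallel loading of in-neighbours: in round j, every processor loads
     the j-th in-neighbour of its node (if any) *)
  [seq LoadR2 [seq (asg t v, nth v (enum (in_nbrs E v)) j)
            | v <- L & j < indeg E v] | j <- iota 0 d]
  ++ [:: CompR3 [seq (asg t v, v) | v <- L];
         SaveR1 [seq (asg t v, v) | v <- L]]
  ++ flatten [seq [seq DelRedR4 (asg t v) u | u <- enum (v |: in_nbrs E v)]
             | v <- L].

Definition greedy_strategy (V : finType) (E : rel V) (k : nat)
  (T : seq {set V}) (asg : nat -> V -> 'I_k) : seq (move V k) :=
  flatten [seq greedy_phase E T asg t | t <- iota 0 (size T)].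

From mathcomp Require Import all_boot zify.
Set Implicit Arguments.
Unset Strict Implicit.
Unset Printing Implicit Defensive.

(* Each phase of the greedy strategy starts and ends with no red pebble and the
   previously scheduled nodes blue, and costs at most g (Delta_in + 1) + 1; so the
   strategy is valid and costs at most s (g (Delta_in + 1) + 1) for s = |sigma|.
   In any pebbling strategy, pebbles are only created by compute steps, and the
   in-neighbours of a node are pebbled when it is computed.  As every sink ends
   pebbled and every node is an ancestor of a sink, a strategy with C compute
   steps computes every node, at most k per step, so |V| <= k C; moreover the
   index of the first compute step of a node strictly increases along edges.
   In a non-idle greedy schedule, a set of size < k contains every available
   node, so it raises the minimum of this index over the unscheduled nodes:
   there are at most C such sets and at most |V| / k <= C full ones, whence
   s <= 2 C <= 2 OPT. *)

Section Schedule.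
Variables (V : finType) (E : rel V) (k : nat) (T : seq {set V}).
Hypothesis sched : non_idle_greedy_schedule E k T.

Lemma sched_before0 : sched_before T 0 = set0.
Proof. by rewrite /sched_before big_ord0. Qed.

Lemma sched_beforeS t : sched_before T t.+1 = sched_before T t :|: nth set0 T t.
Proof. by rewrite /sched_before big_ord_recr. Qed.

Lemma sched_before_size : sched_before T (size T) = setT.
Proof.
case: sched => cover _; apply/setP => v; rewrite inE.
by have [t ht vt] := cover v; apply/bigcupP; exists (Ordinal ht).
Qed.

Lemma sched_index_unique t1 t2 v : t1 < size T -> t2 < size T ->
  v \in nth set0 T t1 -> v \in nth set0 T t2 -> t1 = t2.
Proof.
case: sched => _ [disj _] h1 h2 v1 v2; apply/eqP/negPn/negP => ne.
by rewrite (disjointFr (disj _ _ h1 h2 ne) v1) in v2.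
Qed.

Lemma notin_sched_before t v :
  t < size T -> v \in nth set0 T t -> v \notin sched_before T t.
Proof.
move=> ht vt; apply/bigcupP => -[i _ vi].
have hi : i < size T := ltn_trans (ltn_ord i) ht.
by move: (ltn_ord i); rewrite (sched_index_unique hi ht vi vt) ltnn.
Qed.

Lemma sched_edge t1 t2 u v : t1 < size T -> t2 < size T ->
  u \in nth set0 T t1 -> v \in nth set0 T t2 -> E u v -> t1 < t2.
Proof.
case: sched => _ [_ [_ [_ [prec _]]]] h1 h2 ut1 vt2 Euv.
have /bigcupP[i _ ui] : u \in sched_before T t2.
  by apply: (subsetP (prec _ h2 _ vt2)); rewrite inE.
have hi : i < size T := ltn_trans (ltn_ord i) h2.
by rewrite -(sched_index_unique hi h1 ui ut1).
Qed.

Variables (f : V -> nat) (C : nat).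
Hypotheses (f_lt : forall v, f v < C) (f_edge : forall u v, E u v -> f u < f v).

Lemma idle_step_level t n : t < size T -> #|nth set0 T t| < k ->
  (forall v, v \notin sched_before T t -> n <= f v) ->
  forall v, v \notin sched_before T t.+1 -> n < f v.
Proof.
case: sched => _ [_ [_ [_ [_ nonidle]]]] ht small lev v.
rewrite sched_beforeS inE negb_or => /andP[vs vt].
have /subsetPn[w] : ~~ (in_nbrs E v \subset sched_before T t).
  by apply: contra vt; apply: nonidle.
by rewrite inE => Ewv /lev; have := f_edge Ewv; lia.
Qed.

Lemma sched_level t : t <= size T -> exists n, [/\ n <= C,
  k * (t - n) <= #|sched_before T t| &
  forall v, v \notin sched_before T t -> n <= f v].
Proof.
elim: t => [|t IH] ht; first by exists 0; rewrite muln0 leq0n.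
have [n [nC cardt lev]] := IH (ltnW ht).
case: (ltnP #|nth set0 T t| k) => small.
- exists n.+1; split.
  + case: sched => _ [_ [ne _]]; have /set0Pn[v vt] := ne t ht.
    by have := lev v (notin_sched_before ht vt); have := f_lt v; lia.
  + by rewrite subSS (leq_trans cardt) // sched_beforeS subset_leq_card ?subsetUl.
  + exact: idle_step_level.
- exists n; split => // [|v]; last first.
    by rewrite sched_beforeS inE negb_or => /andP[/lev].
  have disjt : [disjoint nth set0 T t & sched_before T t].
    by rewrite disjoint_subset; apply/subsetP => v vt; rewrite inE notin_sched_before.
  rewrite sched_beforeS cardsU setIC disjoint_setI0 // cards0 subn0.
  apply: (@leq_trans (k * (t - n).+1)); first by rewrite leq_mul2l; apply/orP; right; lia.
  by rewrite mulnS addnC leq_add.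
Qed.

Lemma sched_size_bound : k * (size T - C) <= #|V|.
Proof.
have [n [nC cardT _]] := sched_level (leqnn _).
rewrite sched_before_size cardsT in cardT.
by apply: leq_trans cardT; rewrite leq_mul2l leq_sub2l ?orbT.
Qed.

End Schedule.

Lemma indeg_le_max (V : finType) (E : rel V) v : indeg E v <= max_indeg E.
Proof. exact: leq_bigmax. Qed.

Section GreedyRun.
Variables (V : finType) (E : rel V) (k r : nat).
Implicit Types (c : config V k) (R : {ffun 'I_k -> {set V}}) (B : {set V}).

Lemma run_cat c c' s1 s2 :
  run E r c s1 = Some c' -> run E r c (s1 ++ s2) = run E r c' s2.
Proof.
elim: s1 c => [|m s1 IH] c /=; first by move=> /Some_inj ->.
by case: (step E c m) => [c1|] //; case: ifP => // _; apply: IH.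
Qed.

Lemma run_step c m c' s :
  step E c m = Some c' -> valid_config r c' -> run E r c (m :: s) = run E r c' s.
Proof. by move=> /= -> ->. Qed.

Lemma run_DelRedR4 (j : 'I_k) (us : seq V) R B :
  uniq us -> {subset us <= R j} -> valid_config r (R, B) ->
  run E r (R, B) [seq DelRedR4 j u | u <- us] =
  Some ([ffun i => if i == j then R i :\: [set x in us] else R i], B).
Proof.
elim: us R => [|u us IH] R /=.
  move=> _ _ _; congr (Some (_, _)); apply/ffunP => i; rewrite ffunE.
  by case: eqP => // ->; apply/setP => x; rewrite !inE; case: (x \in R j).
move=> /andP[uus uq] sub val; rewrite (sub u (mem_head _ _)).
have val' : valid_config r ([ffun i => if i == j then R i :\ u else R i], B).
  apply/forallP => i; rewrite ffunE; move/forallP: val => /(_ i) /=.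
  by case: eqP => // _; apply/leq_trans/subset_leq_card/subsetDl.
rewrite val' IH //.
- congr (Some (_, _)); apply/ffunP => i; rewrite !ffunE.
  case: eqP => // _; apply/setP => x; rewrite !inE.
  by case: (x == u); case: (x \in us); case: (x \in R i).
- move=> x xus; rewrite ffunE eqxx !inE (sub x) ?andbT; last by rewrite inE xus orbT.
  by apply: contraNneq uus => <-.
Qed.

Lemma nth_in_nbrs (v : V) j :
  j < indeg E v -> nth v (enum (in_nbrs E v)) j \in in_nbrs E v.
Proof. by move=> jv; rewrite -mem_enum mem_nth // -cardE. Qed.

Lemma index_in_nbrs (u v : V) :
  u \in in_nbrs E v -> index u (enum (in_nbrs E v)) < indeg E v.
Proof. by rewrite /indeg cardE index_mem mem_enum. Qed.

Section Phase.
Variables (Tt : {set V}) (a : V -> 'I_k).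
Hypotheses (a_inj : {in Tt &, injective a}) (r_ge : max_indeg E + 1 <= r).

(* The red pebbles after [j] load rounds of the phase. *)
Definition loaded_reds (j : nat) : {ffun 'I_k -> {set V}} :=
  [ffun p => [set u | [exists v in Tt, (a v == p) && (u \in in_nbrs E v)
                          && (index u (enum (in_nbrs E v)) < j)]]].

(* The red pebbles between the compute step and the deletions, once only the
   nodes [X] of the phase still hold theirs. *)
Definition phase_reds (X : seq V) : {ffun 'I_k -> {set V}} :=
  [ffun p => [set u | has (fun v => (a v == p) && (u \in v |: in_nbrs E v)) X]].

Lemma loaded_reds0 : loaded_reds 0 = [ffun => set0].
Proof.
apply/ffunP => p; rewrite !ffunE; apply/setP => u; rewrite !inE.
by apply/existsP => -[v]; rewrite ltn0 !andbF.
Qed.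

Lemma phase_reds_nil : phase_reds [::] = [ffun => set0].
Proof. by apply/ffunP => p; rewrite !ffunE; apply/setP => u; rewrite !inE. Qed.

Lemma card_reds_le (S : {set V}) p :
  (forall u, u \in S -> exists2 v, v \in Tt & a v = p /\ u \in v |: in_nbrs E v) ->
  #|S| <= r.
Proof.
move=> hS; have [->|[u0 /hS[v0 v0T [av0 _]]]] := set_0Vmem S; first by rewrite cards0.
have /subset_leq_card/leq_trans -> // : S \subset v0 |: in_nbrs E v0.
  apply/subsetP => u /hS[v vT [av uv]].
  by rewrite -(a_inj vT v0T) // av av0.
rewrite cardsU1; have := indeg_le_max E v0; rewrite /indeg.
by case: (_ \notin _) => /=; lia.
Qed.

Lemma valid_loaded_reds B j : valid_config r (loaded_reds j, B).
Proof.
apply/forallP => p /=; apply: (card_reds_le (p := p)) => u.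
rewrite ffunE inE => /existsP[v /andP[vT /andP[/andP[/eqP av uv] _]]].
by exists v => //; rewrite inE uv orbT.
Qed.

Lemma valid_phase_reds B X : {subset X <= Tt} -> valid_config r (phase_reds X, B).
Proof.
move=> XT; apply/forallP => p /=; apply: (card_reds_le (p := p)) => u.
rewrite ffunE inE => /hasP[v vX /andP[/eqP av uv]].
by exists v; rewrite ?XT.
Qed.

Lemma uniq_assigned (f : V -> V) (s : seq V) :
  uniq s -> {subset s <= Tt} -> uniq (map fst [seq (a v, f v) | v <- s]).
Proof.
move=> us sT; rewrite -map_comp map_inj_in_uniq // => x y /sT xT /sT yT.
exact: a_inj.
Qed.

Lemma add_red_loads j :
  add_red (loaded_reds j)
    [seq (a v, nth v (enum (in_nbrs E v)) j) | v <- enum Tt & j < indeg E v]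
  = loaded_reds j.+1.
Proof.
apply/ffunP => p; rewrite !ffunE; apply/setP => u; rewrite !inE.
apply/idP/existsP.
- case/orP => [/existsP[v /andP[vT /andP[/andP[av uv] idx]]]|].
    by exists v; rewrite vT av uv ltnW.
  case/mapP => v; rewrite mem_filter mem_enum => /andP[jv vT] [-> ->].
  exists v; rewrite vT eqxx nth_in_nbrs //=.
  by rewrite index_uniq ?enum_uniq // -cardE.
- move=> [v /andP[vT /andP[/andP[/eqP av uv] idx]]].
  rewrite ltnS leq_eqVlt in idx; case/orP: idx => [/eqP ij | ij].
    apply/orP; right; apply/mapP; exists v.
      by rewrite mem_filter mem_enum vT andbT -ij index_in_nbrs.
    by rewrite av -ij nth_index // mem_enum.
  by apply/orP; left; apply/existsP; exists v; rewrite vT av eqxx uv ij.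
Qed.

Lemma run_loads B j m : (forall v, v \in Tt -> in_nbrs E v \subset B) ->
  run E r (loaded_reds j, B)
    [seq LoadR2 [seq (a v, nth v (enum (in_nbrs E v)) j) | v <- enum Tt & j < indeg E v]
    | j <- iota j m] = Some (loaded_reds (j + m), B).
Proof.
move=> prec; elim: m j => [|m IH] j; first by rewrite addn0.
set l := [seq (a v, nth v (enum (in_nbrs E v)) j) | v <- enum Tt & j < indeg E v].
have l_uniq : uniq (map fst l).
  apply: uniq_assigned; first exact/filter_uniq/enum_uniq.
  by move=> v; rewrite mem_filter mem_enum => /andP[].
have l_blue : all (fun p => p.2 \in B) l.
  apply/allP => p /mapP[v]; rewrite mem_filter mem_enum => /andP[jv vT] -> /=.
  exact: subsetP (prec v vT) _ (nth_in_nbrs jv).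
rewrite [iota _ _]/= map_cons (run_step _ _ (c' := (loaded_reds j.+1, B))).
- by rewrite IH addSnnS.
- by rewrite /= l_uniq l_blue add_red_loads.
- exact: valid_loaded_reds.
Qed.

Lemma add_red_computed :
  add_red (loaded_reds (\max_(v in Tt) indeg E v)) [seq (a v, v) | v <- enum Tt]
  = phase_reds (enum Tt).
Proof.
apply/ffunP => p; rewrite !ffunE; apply/setP => u; rewrite !inE.
apply/idP/hasP.
- case/orP => [/existsP[v /andP[vT /andP[/andP[av uv] _]]]|/mapP[v vT [-> ->]]].
    by exists v; rewrite ?mem_enum // av setU1r.
  by exists v; rewrite // eqxx setU11.
- move=> [v vT /andP[/eqP av]]; case/setU1P => [->|uv].
    by apply/orP; right; apply/mapP; exists v; rewrite // av.
  apply/orP; left; apply/existsP; exists v; rewrite -mem_enum vT av eqxx uv /=.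
  by apply: leq_trans (index_in_nbrs uv) (leq_bigmax_cond _ _); rewrite -mem_enum.
Qed.

Lemma run_compute_save B :
  run E r (loaded_reds (\max_(v in Tt) indeg E v), B)
    [:: CompR3 [seq (a v, v) | v <- enum Tt]; SaveR1 [seq (a v, v) | v <- enum Tt]]
  = Some (phase_reds (enum Tt), B :|: Tt).
Proof.
have enumT : {subset enum Tt <= Tt} by move=> v; rewrite mem_enum.
have l_uniq : uniq (map fst [seq (a v, v) | v <- enum Tt]).
  by rewrite uniq_assigned ?enum_uniq.
have l_ready : all (fun p => in_nbrs E p.2 \subset
                               loaded_reds (\max_(v in Tt) indeg E v) p.1)
                 [seq (a v, v) | v <- enum Tt].
  apply/allP => p /mapP[w wT ->]; apply/subsetP => u uw; rewrite ffunE inE.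
  apply/existsP; exists w; rewrite -mem_enum wT eqxx uw /=.
  by apply: leq_trans (index_in_nbrs uw) (leq_bigmax_cond _ _); rewrite -mem_enum.
have l_red :
    all (fun p => p.2 \in phase_reds (enum Tt) p.1) [seq (a v, v) | v <- enum Tt].
  apply/allP => p /mapP[w wT ->]; rewrite ffunE inE; apply/hasP; exists w => //.
  by rewrite eqxx setU11.
have l_nodes : [set v | v \in map snd [seq (a v, v) | v <- enum Tt]] = Tt.
  by apply/setP => v; rewrite inE -map_comp map_id mem_enum.
rewrite (run_step _ _ (c' := (phase_reds (enum Tt), B))); last first.
- exact: valid_phase_reds.
- by rewrite /= l_uniq l_ready add_red_computed.
rewrite (run_step _ _ (c' := (phase_reds (enum Tt), B :|: Tt))) ?valid_phase_reds //.
by rewrite /= l_uniq l_red l_nodes.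
Qed.

Lemma run_deletions B X : uniq X -> {subset X <= Tt} ->
  run E r (phase_reds X, B)
    (flatten [seq [seq DelRedR4 (a v) u | u <- enum (v |: in_nbrs E v)] | v <- X])
  = Some ([ffun => set0], B).
Proof.
elim: X => [|v X IH] /=; first by rewrite phase_reds_nil.
move=> /andP[vX uX] sub.
rewrite (run_cat _ (run_DelRedR4 _ _ _)) ?enum_uniq ?valid_phase_reds //; last first.
  by move=> u; rewrite mem_enum => uv; rewrite ffunE inE /= eqxx uv.
rewrite -IH //; last by move=> w wX; apply: sub; rewrite inE wX orbT.
congr (run _ _ (_, _) _); apply/ffunP => i; rewrite !ffunE.
case: eqP => [->|ne]; apply/setP => u; rewrite !inE /=.
  rewrite mem_enum eqxx /=; case: (u \in v |: _) => //=; apply/esym/hasPn => w wX.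
  apply: contraNN vX => /andP[/eqP aw _].
  by rewrite -(a_inj _ _ aw) ?sub // inE ?wX ?eqxx ?orbT.
by rewrite (_ : (a v == i) = false) //; apply/eqP => ai; apply: ne.
Qed.

End Phase.

Lemma run_greedy_phase (T : seq {set V}) (asg : nat -> V -> 'I_k) t B :
  {in nth set0 T t &, injective (asg t)} -> max_indeg E + 1 <= r ->
  (forall v, v \in nth set0 T t -> in_nbrs E v \subset B) ->
  run E r ([ffun => set0], B) (greedy_phase E T asg t)
  = Some ([ffun => set0], B :|: nth set0 T t).
Proof.
move=> inj hr prec; rewrite /greedy_phase -{1}(loaded_reds0 (nth set0 T t) (asg t)).
rewrite (run_cat _ (run_loads inj hr 0 _ prec)) add0n.
rewrite (run_cat _ (run_compute_save inj hr B)).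
by rewrite (run_deletions inj hr) ?enum_uniq // => v; rewrite mem_enum.
Qed.

Section Greedy.
Variables (T : seq {set V}) (asg : nat -> V -> 'I_k).
Hypotheses (r_ge : max_indeg E + 1 <= r) (sched : non_idle_greedy_schedule E k T)
  (asg_inj : forall t, t < size T -> {in nth set0 T t &, injective (asg t)}).

Lemma run_greedy_phases t0 m :
  t0 + m <= size T ->
  run E r ([ffun => set0], sched_before T t0)
     (flatten [seq greedy_phase E T asg t | t <- iota t0 m])
  = Some ([ffun => set0], sched_before T (t0 + m)).
Proof.
case: sched => _ [_ [_ [_ [prec _]]]].
elim: m t0 => [|m IH] t0 hm; first by rewrite addn0.
have ht0 : t0 < size T by lia.
rewrite /= (run_cat _ (run_greedy_phase (asg_inj ht0) r_ge (prec _ ht0))).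
by rewrite -sched_beforeS IH -?addSnnS //; lia.
Qed.

Lemma greedy_strategy_valid : pebbling_strategy E r (greedy_strategy E T asg).
Proof.
rewrite /pebbling_strategy /greedy_strategy.
have := run_greedy_phases (t0 := 0) (m := size T) (leqnn _).
rewrite sched_before0 add0n (sched_before_size sched) => -> /=.
by apply/forallP => v; rewrite inE implybT.
Qed.

End Greedy.
End GreedyRun.

Section Cost.
Variables (V : finType) (E : rel V) (k g : nat).

Lemma greedy_phase_cost (T : seq {set V}) (asg : nat -> V -> 'I_k) t :
  \sum_(m <- greedy_phase E T asg t) move_cost g m <= g * (max_indeg E + 1) + 1.
Proof.
have dmax : \max_(v in nth set0 T t) indeg E v <= max_indeg E.
  by apply/bigmax_leqP => v _; apply: indeg_le_max.
rewrite /greedy_phase !big_cat /= !big_cons big_nil big_map.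
rewrite big_flatten big_map big1 => [|v _]; last by rewrite big_map big1.
rewrite /= big_const_seq count_predT size_iota iter_addn_0; nia.
Qed.

Lemma greedy_strategy_cost (T : seq {set V}) (asg : nat -> V -> 'I_k) :
  strategy_cost g (greedy_strategy E T asg) <= size T * (g * (max_indeg E + 1) + 1).
Proof.
rewrite /strategy_cost /greedy_strategy big_flatten /= big_map.
set X := g * (max_indeg E + 1) + 1.
have -> : size T * X = \sum_(t <- iota 0 (size T)) X.
  by rewrite big_const_seq count_predT size_iota iter_addn_0 mulnC.
by apply: leq_sum => t _; apply: greedy_phase_cost.
Qed.

End Cost.

Section LowerBound.
Variables (V : finType) (E : rel V) (k r : nat).
Implicit Types (c : config V k) (S : seq (move V k)) (ls : seq (seq ('I_k * V)))
  (R : {ffun 'I_k -> {set V}}) (B : {set V}).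

Definition compute_steps S : seq (seq ('I_k * V)) :=
  pmap (fun m => if m is CompR3 l then Some l else None) S.
Arguments compute_steps : simpl never.

Definition computed_before ls (i : nat) : {set V} :=
  [set v | has (fun l => v \in map snd l) (take i ls)].

Definition first_computed ls (v : V) : nat := find (fun l => v \in map snd l) ls.

Definition pebbled c (v : V) : bool := (v \in c.2) || [exists j, v \in c.1 j].

Lemma compute_steps_CompR3 l S : compute_steps (CompR3 l :: S) = l :: compute_steps S.
Proof. by []. Qed.

Lemma computed_before0 ls : computed_before ls 0 = set0.
Proof. by apply/setP => v; rewrite !inE take0. Qed.

Lemma computed_beforeS l ls i :
  computed_before (l :: ls) i.+1 = [set v | v \in map snd l] :|: computed_before ls i.
Proof. by apply/setP => v; rewrite !inE. Qed.

Lemma first_computed_lt ls i v : v \in computed_before ls i -> first_computed ls v < i.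
Proof. by rewrite inE => /find_ltn. Qed.

Lemma pebbled_red R B p v : v \in R p -> pebbled (R, B) v.
Proof. by move=> vR; apply/orP; right; apply/existsP; exists p. Qed.

Lemma pebbled_blue R B v : v \in B -> pebbled (R, B) v.
Proof. by move=> vB; apply/orP; left. Qed.

Lemma pebbled_step c m c' v : step E c m = Some c' -> pebbled c' v ->
  pebbled c v || (if m is CompR3 l then v \in map snd l else false).
Proof.
case: c => R B; case: m => [l|l|l|j u|u] /=; rewrite ?orbF.
- case: ifP => // /andP[_ /allP lR] [<-]; rewrite /pebbled /= !inE.
  case/orP=> [/orP[->//|/mapP[[p w] /lR wR ->]]|->]; last by rewrite orbT.
  exact: pebbled_red wR.
- case: ifP => // /andP[_ /allP lB] [<-]; rewrite {1}/pebbled /=.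
  case/orP=> [/pebbled_blue//|/existsP[p]]; rewrite ffunE !inE.
  by case/orP=> [/pebbled_red|/lB/pebbled_blue].
- case: ifP => // _ [<-]; rewrite {1}/pebbled /=.
  case/orP=> [/pebbled_blue->//|/existsP[p]]; rewrite ffunE !inE.
  case/orP=> [/pebbled_red->//|vl].
  by apply/orP; right; apply/mapP; exists (p, v).
- case: ifP => // _ [<-]; rewrite {1}/pebbled /=.
  case/orP=> [/pebbled_blue//|/existsP[p]]; rewrite ffunE.
  by case: eqP => _; [rewrite inE => /andP[_] |]; apply: pebbled_red.
- case: ifP => // _ [<-]; rewrite {1}/pebbled /=.
  by case/orP=> [|/existsP[p] /pebbled_red//]; rewrite inE => /andP[_ /pebbled_blue].
Qed.

Lemma step_CompR3 c l c' : step E c (CompR3 l) = Some c' ->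
  uniq (map fst l) /\
  forall pv, pv \in l -> forall u, u \in in_nbrs E pv.2 -> pebbled c u.
Proof.
case: c => R B /=; case: ifP => // /andP[uq /allP lR] _.
split=> // pv /lR sub u /(subsetP sub) uR.
by apply/orP; right; apply/existsP; exists pv.1.
Qed.

Lemma run_compute_uniq c S c' l :
  run E r c S = Some c' -> l \in compute_steps S -> uniq (map fst l).
Proof.
elim: S c => [|m S IH] c //=; case st: (step E c m) => [c1|] //; case: ifP => // _ run1.
case: m st => [l'|l'|l'|j u|u] st; try exact: IH run1.
rewrite compute_steps_CompR3 inE => /orP[/eqP->|]; last exact: IH run1.
by case: (step_CompR3 st).
Qed.

Lemma run_compute_steps c S c' (X : {set V}) :
  run E r c S = Some c' -> (forall v, pebbled c v -> v \in X) ->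
  let ls := compute_steps S in
  (forall i pv, i < size ls -> pv \in nth [::] ls i ->
     in_nbrs E pv.2 \subset X :|: computed_before ls i)
  /\ (forall v, pebbled c' v -> v \in X :|: computed_before ls (size ls)).
Proof.
elim: S c X => [|m S IH] c X /=.
  by case=> <- cX; split=> // v /cX; rewrite computed_before0 setU0.
case st: (step E c m) => [c1|] //; case: ifP => // _ run1 cX.
have c1X := pebbled_step st.
case: m st c1X => [l|l|l|j u|u] st c1X;
  try by apply: IH run1 _ => v /c1X; rewrite orbF => /cX.
rewrite compute_steps_CompR3 /=.
have [_ pre] := step_CompR3 st.
have c1X' : forall v, pebbled c1 v -> v \in X :|: [set v | v \in map snd l].
  by move=> v /c1X /orP[/cX vX|vl]; rewrite inE ?vX // inE vl orbT.
have [IH1 IH2] := IH _ _ run1 c1X'.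
split=> [[|i] pv|v /IH2]; rewrite ?computed_beforeS ?setUA //.
- move=> _ /pre pvc; rewrite computed_before0 setU0.
  by apply/subsetP => u /pvc /cX.
- by rewrite ltnS; apply: IH1.
Qed.

Section Strategy.
Variable S : seq (move V k).
Hypothesis strat : pebbling_strategy E r S.
Let ls := compute_steps S.

Lemma strategy_run : exists c', run E r (init_config V k) S = Some c' /\ terminal E c'.
Proof. by move: strat; rewrite /pebbling_strategy; case: run => // c' ?; exists c'. Qed.

Lemma init_unpebbled v : pebbled (init_config V k) v -> v \in (set0 : {set V}).
Proof. by rewrite /pebbled /= inE => /existsP[j]; rewrite ffunE inE. Qed.

Lemma strategy_compute_size l : l \in ls -> size l <= k.
Proof.
have [c' [run1 _]] := strategy_run; move=> /(run_compute_uniq run1) uq.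
rewrite -(size_map fst); apply: leq_trans (uniq_leq_size uq (fun p _ => mem_enum _ p)) _.
by rewrite size_enum_ord.
Qed.

Lemma strategy_compute_order u v :
  E u v -> first_computed ls v < size ls -> first_computed ls u < first_computed ls v.
Proof.
have [c' [run1 _]] := strategy_run.
have [pre _] := run_compute_steps run1 init_unpebbled.
move=> Euv vc; have := vc; rewrite /first_computed -has_find.
move=> /(nth_find [::]) /mapP[pv pvl vE].
apply: first_computed_lt; rewrite -[computed_before _ _]set0U.
by apply: (subsetP (pre _ _ vc pvl)); rewrite -vE inE.
Qed.

Lemma strategy_computes_sinks v : is_sink E v -> first_computed ls v < size ls.
Proof.
have [c' [run1 term]] := strategy_run.
have [_ fin] := run_compute_steps run1 init_unpebbled.
move=> sv; move/forallP: term => /(_ v); rewrite sv => /fin.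
by rewrite set0U inE take_size -has_find.
Qed.

End Strategy.

Lemma size_compute_steps g S : size (compute_steps S) <= strategy_cost g S.
Proof.
rewrite /strategy_cost; elim: S => [|m S IH]; first by rewrite big_nil.
rewrite big_cons; case: m => [l|l|l|j u|u] /=; try exact: leq_trans IH (leq_addl _ _).
by rewrite add1n ltnS.
Qed.

Section ComputeOrder.
Variables (T : seq {set V}) (ls : seq (seq ('I_k * V))).
Hypotheses (sched : non_idle_greedy_schedule E k T)
  (order : forall u v, E u v -> first_computed ls v < size ls ->
     first_computed ls u < first_computed ls v)
  (sinks : forall v, is_sink E v -> first_computed ls v < size ls).

(* A non-sink node has an out-neighbour in a later set of the schedule, and the
   in-neighbours of a computed node are computed before it. *)
Lemma all_computed v : first_computed ls v < size ls.
Proof.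
case: (sched) => cover _.
suff {v} comp n t v : size T - t <= n -> t < size T -> v \in nth set0 T t ->
    first_computed ls v < size ls.
  by have [t ht vt] := cover v; apply: (comp _ t).
elim: n t v => [|n IH] t v hn ht vt; first lia.
have [/sinks //|] := boolP (is_sink E v).
rewrite negb_forall => /existsP[w]; rewrite negbK => Evw.
have [t' ht' wt'] := cover w.
have tt' := sched_edge sched ht ht' vt wt' Evw.
have wc := IH t' w ltac:(lia) ht' wt'.
exact: ltn_trans (order Evw wc) wc.
Qed.

Lemma card_le_compute_steps :
  (forall l, l \in ls -> size l <= k) -> #|V| <= k * size ls.
Proof.
move=> small; apply: leq_trans (_ : size (flatten (map (map snd) ls)) <= _).
  apply: leq_trans (card_size _); apply/subset_leq_card/subsetP => v _.
  have /hasP[l lls vl] : has (fun l => v \in map snd l) ls.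
    by rewrite has_find; apply: all_computed.
  by apply/flattenP; exists (map snd l); rewrite ?map_f.
have -> : k * size ls = \sum_(l <- ls) k.
  by rewrite big_const_seq count_predT iter_addn_0 mulnC.
rewrite size_flatten /shape -map_comp sumnE big_map !big_seq.
by apply: leq_sum => l lls; rewrite /= size_map small.
Qed.

End ComputeOrder.
End LowerBound.

Theorem lemma3 (V : finType) (E : rel V) (k g r : nat)
  (T : seq {set V}) (asg : nat -> V -> 'I_k) :
  acyclic E ->
  0 < k -> 0 < g -> 0 < r ->
  max_indeg E + 1 <= r ->
  non_idle_greedy_schedule E k T ->
  (forall t, t < size T -> {in nth set0 T t &, injective (asg t)}) ->
  pebbling_strategy E r (greedy_strategy E T asg) /\
  (forall S : seq (move V k), pebbling_strategy E r S ->
     strategy_cost g (greedy_strategy E T asg)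
       <= 2 * (g * (max_indeg E + 1) + 1) * strategy_cost g S).
Proof.
(* Acyclicity already follows from the existence of the schedule. *)
move=> _ k_gt0 _ _ r_ge sched asg_inj; split; first exact: greedy_strategy_valid.
move=> S strat.
have order := strategy_compute_order strat.
have computed := all_computed sched order (strategy_computes_sinks strat).
have cardV := card_le_compute_steps sched order (strategy_computes_sinks strat)
  (strategy_compute_size strat).
have lenT := sched_size_bound sched computed (fun u v Euv => order u v Euv (computed v)).
have lenT2 : size T <= 2 * size (compute_steps S).
  by have := leq_trans lenT cardV; rewrite leq_pmul2l //; lia.
apply: leq_trans (greedy_strategy_cost E g T asg) _.
rewrite mulnAC leq_mul // (leq_trans lenT2) //.
by rewrite leq_mul2l size_compute_steps orbT.
Qed.
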